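(* Let $T$ be a light tournament and $z\in V(T)$. Then $V_3(z)$ is 2-in-dominated by $V_2(z)$: there is a set $Z'\subseteq V_2(z)$ with $|Z'|\le 2$ such that every $s\in V_3(z)$ has an arc $(s,z')\in A(T)$ for some $z'\in Z'$.
   Context: A triangle of a tournament is a set of three vertices inducing a directed 3-cycle. An unordered pair $ab$ of vertices is a diagonal if there exist vertices $u,v$ with $\{u,v,a\}$ and $\{u,v,b\}$ both triangles. A triangle is heavy if at least two of its pairs are diagonals; a tournament is light if it has no heavy triangle. For $S\subseteq V(T)$, $N(S)=\{v\notin S: (v,u)\in A(T)\text{ for some }u\in S\}$. For $z\in V(T)$: $V_1(z)=\{z\}$ and $V_{j+1}(z)=N\big(\bigcup_{k\le j}V_k(z)\big)$ for $j\ge1$. *)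

From mathcomp Require Import all_boot.
Set Implicit Arguments. Unset Strict Implicit. Unset Printing Implicit Defensive.

Section Tournaments.
Variable T : finType.
Variable adj : rel T.  (* adj u v  <=>  (u,v) is an arc, u -> v *)

Definition tournament : Prop :=
  (forall x, ~~ adj x x) /\ (forall x y, x != y -> adj x y = ~~ adj y x).

Definition triangle (a b c : T) : bool :=
  [&& adj a b, adj b c & adj c a] || [&& adj a c, adj c b & adj b a].

Definition diagonal (a b : T) : bool :=
  (a != b) && [exists u, exists v, triangle u v a && triangle u v b].

Definition heavy (a b c : T) : bool :=
  triangle a b c &&
  [|| diagonal a b && diagonal b c, diagonal b c && diagonal a c
    | diagonal a b && diagonal a c].

Definition light : Prop := forall a b c, ~~ heavy a b c.

Definition Nbr (S : {set T}) : {set T} :=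
  [set v | (v \notin S) && [exists u in S, adj v u]].

(* cum z n = V_1(z) ∪ ... ∪ V_{n+1}(z) *)
Fixpoint cum (z : T) (n : nat) : {set T} :=
  match n with
  | 0 => [set z]
  | n'.+1 => cum z n' :|: Nbr (cum z n')
  end.

(* V_j(z); V_0 is unused (set to empty). *)
Definition Vl (z : T) (j : nat) : {set T} :=
  match j with
  | 0 => set0
  | 1 => [set z]
  | j'.+2 => Nbr (cum z j')
  end.
End Tournaments.

From mathcomp Require Import all_boot.
Set Implicit Arguments. Unset Strict Implicit. Unset Printing Implicit Defensive.

(* In a light tournament T with a vertex z, V_2(z) is the in-neighbourhood
   of z and every s in V_3(z) satisfies z -> s -> y -> z for some y in V_2(z).
   Split V_3(z) according to whether the pair zs is a diagonal.
   - If zs is not a diagonal and z -> s -> s' with s' -> y -> z, then s -> y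
     (otherwise the triangles s'yz and s'ys would make zs a diagonal).  A
     king k of the non-diagonal part of V_3(z) (every vertex reaches k in at
     most two steps) beats some y1 in V_2(z), and the previous fact pushes
     the arc into y1 back along these short paths: one vertex covers them.
   - If zs is a diagonal and s -> y -> z, lightness forbids zy from being a
     diagonal.  Dually, arcs from s into the non-diagonal part Y of V_2(z)
     propagate forward along arcs of Y, so a king of Y covers them. *)

Section Kings.
Variables (T : finType) (adj : rel T).

Definition king (X : {set T}) (k : T) : Prop :=
  k \in X /\ forall x, x \in X -> x != k ->
    adj x k \/ exists2 w, w \in X & adj x w && adj w k.

(* Every nonempty vertex set of a tournament has a king: take a vertex with
   the largest in-degree inside X. *)
Lemma exists_king (X : {set T}) (x0 : T) :
  tournament adj -> x0 \in X -> exists k, king X k.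
Proof.
move=> [irr asym] Xx0.
have [k Xk kmax] := arg_maxnP (fun k => #|[set w in X | adj w k]|) Xx0.
exists k; split=> // x Xx xk.
have [xk_arc | nxk_arc] := boolP (adj x k); [by left | right].
have [/exists_inP path | no_path] := boolP [exists w in X, adj x w && adj w k].
  exact: path.
have lt_in : [set w in X | adj w k] \proper [set w in X | adj w x].
  apply/properP; split.
    apply/subsetP => w; rewrite !inE => /andP[Xw wk]; rewrite Xw /=.
    have wx : w != x by apply: contraNneq nxk_arc => <-.
    rewrite (asym _ _ wx); apply: contra no_path => xw.
    by apply/exists_inP; exists w; rewrite ?xw.
  exists k; rewrite !inE; last by rewrite (negbTE (irr k)) andbF.
  by apply/andP; split; [exact: Xk | rewrite (asym k x) ?nxk_arc // eq_sym].
by move: (kmax x Xx); rewrite /= leqNgt (proper_card lt_in).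
Qed.

Lemma king_propagate_back (X : {set T}) (k : T) (Q : pred T) :
  king X k ->
  (forall x x', x \in X -> x' \in X -> adj x x' -> Q x' -> Q x) ->
  Q k -> forall x, x \in X -> Q x.
Proof.
move=> [Xk kingk] closedQ Qk x Xx.
have [-> // | xk] := eqVneq x k.
have [xk_arc | [w Xw /andP[xw wk]]] := kingk x Xx xk.
  exact: closedQ xk_arc Qk.
exact: closedQ xw (closedQ _ _ Xw Xk wk Qk).
Qed.

Lemma king_propagate_fwd (X : {set T}) (k x : T) (Q : pred T) :
  king X k ->
  (forall x x', x \in X -> x' \in X -> adj x x' -> Q x -> Q x') ->
  x \in X -> Q x -> Q k.
Proof.
move=> [Xk kingk] closedQ Xx Qx.
have [<- // | xk] := eqVneq x k.
have [xk_arc | [w Xw /andP[xw wk]]] := kingk x Xx xk.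
  exact: closedQ xk_arc Qx.
exact: closedQ wk (closedQ _ _ Xx Xw xw Qx).
Qed.

Definition in_dominated (A S : {set T}) : Prop :=
  forall s, s \in S -> exists2 a, a \in A & adj s a.

Lemma in_dominatedU (A1 A2 S1 S2 : {set T}) :
  in_dominated A1 S1 -> in_dominated A2 S2 ->
  in_dominated (A1 :|: A2) (S1 :|: S2).
Proof.
move=> dom1 dom2 s; rewrite inE => /orP[/dom1 | /dom2] [a Aa sa];
  by exists a; rewrite // inE Aa ?orbT.
Qed.

End Kings.

Section LightTournament.
Variables (T : finType) (adj : rel T).
Hypothesis tour : tournament adj.

Lemma arc_neq {a b : T} : adj a b -> a != b.
Proof. by move=> ab; apply: contraTneq ab => ->; rewrite tour.1. Qed.

Lemma arc_asym {a b : T} : adj a b -> ~~ adj b a.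
Proof. by move=> ab; rewrite -(tour.2 _ _ (arc_neq ab)). Qed.

Lemma arc_total {a b : T} : a != b -> ~~ adj a b -> adj b a.
Proof. by move=> ab nab; rewrite tour.2 ?nab // eq_sym. Qed.

Lemma diagonal_of_triangles (u v a b : T) :
  a != b -> triangle adj u v a -> triangle adj u v b -> diagonal adj a b.
Proof.
move=> ab tra trb; rewrite /diagonal ab.
by apply/existsP; exists u; apply/existsP; exists v; rewrite tra trb.
Qed.

Lemma nondiagonal_out_transfer (z s s' y : T) :
  adj z s -> ~~ diagonal adj z s -> adj s s' -> adj z s' ->
  adj s' y -> adj y z -> adj s y.
Proof.
move=> zs nd ss' zs' s'y yz; apply/negPn/negP => nsy.
have ys : adj y s.
  by apply: arc_total nsy; apply: contraTneq zs => ->; apply: arc_asym.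
apply: (negP nd); apply: (@diagonal_of_triangles s' y); first exact: arc_neq zs.
  by rewrite /triangle s'y yz zs'.
by rewrite /triangle s'y ys ss'.
Qed.

Lemma nondiagonal_in_transfer (z y y' s : T) :
  adj y z -> ~~ diagonal adj z y -> adj y' y -> adj y' z ->
  adj z s -> adj s y' -> adj s y.
Proof.
move=> yz nd y'y y'z zs sy'; apply/negPn/negP => nsy.
have ys : adj y s.
  by apply: arc_total nsy; apply: contraTneq zs => ->; apply: arc_asym.
apply: (negP nd); apply: (@diagonal_of_triangles s y').
  by rewrite eq_sym; apply: arc_neq.
  by rewrite /triangle sy' y'z zs.
by rewrite /triangle sy' y'y ys.
Qed.

Variable z : T.

Lemma in_Vl2 (y : T) : (y \in Vl adj z 2) = adj y z.
Proof.
rewrite /Vl /= /Nbr !inE; apply/andP/idP => [[_ /exists_inP[u]] | yz].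
  by rewrite inE => /eqP->.
by split; [apply: arc_neq | apply/exists_inP; exists z; rewrite ?inE].
Qed.

Lemma in_Vl3 (s : T) :
  s \in Vl adj z 3 -> adj z s /\ exists2 y, adj y z & adj s y.
Proof.
rewrite /Vl /= /Nbr !inE negb_or => /andP[/andP[sz nbr] /exists_inP[u]].
have nsz : ~~ adj s z.
  by apply: contra nbr => sz_arc; rewrite sz; apply/exists_inP; exists z; rewrite ?inE.
rewrite !inE => /orP[/eqP-> sz_arc | /andP[_ /exists_inP[w]]].
  by rewrite sz_arc in nsz.
rewrite inE => /eqP-> uz su; split; last by exists u.
exact: arc_total sz nsz.
Qed.

Lemma cover_nondiagonal_V3 : exists A : {set T},
  [/\ A \subset Vl adj z 2, #|A| <= 1 &
      in_dominated adj A [set s in Vl adj z 3 | ~~ diagonal adj z s]].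
Proof.
set S := [set s in _ | _].
have [S0 | [s0 Ss0]] := set_0Vmem S.
  by exists set0; rewrite sub0set cards0; split=> // s; rewrite S0 inE.
have [k kingk] := exists_king tour Ss0.
have /in_Vl3[zk [y1 y1z ky1]] : k \in Vl adj z 3 by case: kingk; rewrite inE => /andP[].
exists [set y1]; split; rewrite ?cards1 ?sub1set ?in_Vl2 // => s Ss.
exists y1; rewrite ?inE //.
apply: (king_propagate_back (Q := adj^~ y1) kingk _ ky1 Ss).
move=> x x' Sx Sx' xx' x'y1; move: Sx Sx'.
rewrite inE => /andP[/in_Vl3[zx _] ndx]; rewrite inE => /andP[/in_Vl3[zx' _] _].
exact: nondiagonal_out_transfer zx ndx xx' zx' x'y1 y1z.
Qed.

Hypothesis lightT : light adj.

Lemma not_two_diagonals (s y : T) :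
  adj z s -> adj s y -> adj y z -> ~~ (diagonal adj z s && diagonal adj z y).
Proof.
move=> zs sy yz; apply: contra (lightT z s y) => /andP[dzs dzy].
by rewrite /heavy /triangle zs sy yz dzs dzy !orbT.
Qed.

Lemma cover_diagonal_V3 : exists A : {set T},
  [/\ A \subset Vl adj z 2, #|A| <= 1 &
      in_dominated adj A [set s in Vl adj z 3 | diagonal adj z s]].
Proof.
set Y := [set y in Vl adj z 2 | ~~ diagonal adj z y].
have beatY s : s \in Vl adj z 3 -> diagonal adj z s ->
    adj z s /\ exists2 y, y \in Y & adj s y.
  move=> /in_Vl3[zs [y yz sy]] dzs; split=> //; exists y => //.
  by move: (not_two_diagonals zs sy yz); rewrite inE in_Vl2 yz dzs.
have [Y0 | [y0 Yy0]] := set_0Vmem Y.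
  exists set0; rewrite sub0set cards0; split=> // s; rewrite inE.
  by case/andP=> /beatY/[apply] -[_ [y]]; rewrite Y0 inE.
have [k kingk] := exists_king tour Yy0.
have Yk : k \in Y by case: kingk.
exists [set k]; split; rewrite ?cards1 ?sub1set //; first by move: Yk; rewrite inE => /andP[].
move=> s; rewrite inE => /andP[V3s dzs]; exists k; rewrite ?inE //.
have [zs [y Yy sy]] := beatY s V3s dzs.
apply: (king_propagate_fwd (Q := adj s) kingk _ Yy sy).
move=> x x' Yx Yx' xx' sx; move: Yx Yx'.
rewrite inE in_Vl2 => /andP[xz _]; rewrite inE in_Vl2 => /andP[x'z ndx'].
exact: nondiagonal_in_transfer x'z ndx' xx' xz zs sx.
Qed.

End LightTournament.

Theorem lemma5 (T : finType) (adj : rel T) :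
  tournament adj -> light adj ->
  forall z : T, exists Z' : {set T},
    [/\ Z' \subset Vl adj z 2, #|Z'| <= 2 &
        forall s, s \in Vl adj z 3 -> exists2 z', z' \in Z' & adj s z'].
Proof.
move=> tour lightT z.
have [A1 [sub1 card1 dom1]] := cover_nondiagonal_V3 tour z.
have [A2 [sub2 card2 dom2]] := cover_diagonal_V3 tour z lightT.
exists (A1 :|: A2); split.
- by rewrite subUset sub1 sub2.
- by rewrite (leq_trans (leq_card_setU A1 A2)) // (leq_add card1 card2).
- move=> s V3s; apply: (in_dominatedU dom1 dom2).
  rewrite in_setU; apply/orP.
  by case: (boolP (diagonal adj z s)) => d; [right | left]; rewrite inE V3s d.
Qed.
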